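(* A channel $\mathcal{N}\in\mathrm{CPTP}(A'B\to AB)$ is a conditionally mixing channel if and only if there exist a system $R$, an isometry channel $\mathcal{V}\in\mathrm{CPTP}(A'\to RA)$ and a conditionally unital channel $\mathcal{E}\in\mathrm{CPTP}(RB\to B)$ such that $\mathcal{N}^{A'B\to AB}=\mathcal{E}^{RB\to B}\circ\mathcal{V}^{A'\to RA}$.
   Context: Systems are finite-dimensional, $\mathbf{u}^B=I^B/|B|$; compositions act as identity on systems not involved. A channel $\mathcal{E}\in\mathrm{CPTP}(RB\to B)$ is conditionally unital if $\mathcal{E}(\tau^R\otimes\mathbf{u}^B)=\mathbf{u}^B$ for every density matrix $\tau^R$. A channel $\mathcal{N}\in\mathrm{CPTP}(A'B\to AB)$ is conditionally mixing if (i) it is $B\not\to A$ signalling, i.e. $\mathcal{N}=\mathcal{E}'^{RB\to B}\circ\mathcal{V}'^{A'\to RA}$ for some system $R$, isometry channel $\mathcal{V}'$ and channel $\mathcal{E}'$; and (ii) for every density matrix $\rho^{A'}$ there is a density matrix $\sigma^A$ with $\mathcal{N}(\rho^{A'}\otimes\mathbf{u}^B)=\sigma^A\otimes\mathbf{u}^B$. *)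

(* Quantum systems are finite types (orthonormal basis labels);
   scalars live in an arbitrary numClosedFieldType C (e.g. algC, or complex R
   for R a real closed / real field). Operators on a system I are finite
   functions on I * I (matrix entries X(i,j)); composite systems are product
   types, so the tensor-factor reorderings are explicit reindexings. *)
From HB Require Import structures.
From mathcomp Require Import all_boot all_order all_algebra.
Set Implicit Arguments. Unset Strict Implicit. Unset Printing Implicit Defensive.
Import Order.TTheory GRing.Theory Num.Theory.
Local Open Scope ring_scope.

Section Quantum.
Variable C : numClosedFieldType.

Definition op (I : finType) := {ffun (I * I)%type -> C}.

Definition trace (I : finType) (X : op I) : C := \sum_(i : I) X (i, i).

Definition psd (I : finType) (X : op I) : Prop :=
  forall v : I -> C, 0 <= \sum_(i : I) \sum_(j : I) (v i)^* * X (i, j) * v j.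

Definition density (I : finType) (X : op I) : Prop := psd X /\ trace X = 1.

Definition optens (I J : finType) (X : op I) (Y : op J) : op (I * J)%type :=
  [ffun p => X (p.1.1, p.2.1) * Y (p.1.2, p.2.2)].

Definition mixed (I : finType) : op I :=
  [ffun p => (p.1 == p.2)%:R / #|I|%:R].

Definition linmap (I J : finType) := op I -> op J.

Definition linear_map (I J : finType) (F : linmap I J) : Prop :=
  forall (a : C) (X Y : op I),
    F [ffun p => a * X p + Y p] = [ffun p => a * F X p + F Y p].

Definition id_tens (K I J : finType) (F : linmap I J) : linmap (K * I)%type (K * J)%type :=
  fun X => [ffun p =>
    F [ffun q => X ((p.1.1, q.1), (p.2.1, q.2))] (p.1.2, p.2.2)].

Definition tens_id (K I J : finType) (F : linmap I J) : linmap (I * K)%type (J * K)%type :=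
  fun X => [ffun p =>
    F [ffun q => X ((q.1, p.1.2), (q.2, p.2.2))] (p.1.1, p.2.1)].

Definition completely_positive (I J : finType) (F : linmap I J) : Prop :=
  forall (K : finType) (X : op (K * I)%type), psd X -> psd (@id_tens K I J F X).

Definition trace_preserving (I J : finType) (F : linmap I J) : Prop :=
  forall X : op I, trace (F X) = trace X.

Definition cptp (I J : finType) (F : linmap I J) : Prop :=
  [/\ linear_map F, completely_positive F & trace_preserving F].

Definition isometry (I J : finType) (W : {ffun (J * I)%type -> C}) : Prop :=
  forall a b : I, \sum_(x : J) (W (x, a))^* * W (x, b) = (a == b)%:R.

Definition isometry_channel (I J : finType) (V : linmap I J) : Prop :=
  exists W : {ffun (J * I)%type -> C}, isometry W /\
    forall X : op I, V X =
      [ffun p => \sum_(a : I) \sum_(b : I) W (p.1, a) * X (a, b) * (W (p.2, b))^*].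

(* The composition E^{RB->B} o V^{A'->RA} in CPTP(A'B -> AB):
   first V (x) id_B : A'B -> (RA)B, then id_A (x) E acting on the R and B
   factors (the identity acting on A). *)
Definition compose_RB (A' A B R : finType)
    (E : linmap (R * B)%type B) (V : linmap A' (R * A)%type) : linmap (A' * B)%type (A * B)%type :=
  fun X =>
    let Y := @tens_id B A' (R * A)%type V X in
    [ffun p =>
      E [ffun q => Y (((q.1.1, p.1.1), q.1.2), ((q.2.1, p.2.1), q.2.2))]
        (p.1.2, p.2.2)].

Definition cond_unital (R B : finType) (E : linmap (R * B)%type B) : Prop :=
  forall tau : op R, density tau -> E (optens tau (mixed B)) = mixed B.

Definition no_signalling_B_to_A (A' A B : finType) (N : linmap (A' * B)%type (A * B)%type)
  : Prop :=
  exists (R : finType) (V' : linmap A' (R * A)%type) (E' : linmap (R * B)%type B),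
    [/\ isometry_channel V', cptp E' & forall X, N X = compose_RB E' V' X].

Definition cond_mixing (A' A B : finType) (N : linmap (A' * B)%type (A * B)%type) : Prop :=
  no_signalling_B_to_A N /\
  forall rho : op A', density rho ->
    exists sigma : op A, density sigma /\
      N (optens rho (mixed B)) = optens sigma (mixed B).

End Quantum.

From Pilot Require Import Defs.
From HB Require Import structures.
From mathcomp Require Import all_boot all_order all_algebra.
From mathcomp Require Import ring.

(* If E is conditionally unital, then by linearity E (X (x) u) = tr(X) u for
   every X, so E o V sends rho (x) u to tr_R(V rho V^dagger) (x) u.
   Conversely, let N = E' o V' be conditionally mixing. Comparing the (a, a')
   blocks of N (rho (x) u) = sigma (x) u shows that E' maps X (x) u to a
   multiple of u whenever X is an R-block of V' rho V'^dagger; these blocks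
   span all |w_s><w_t|, where w_s are the R-components of the columns of V'.
   Restrict R to the span of the w_s: with an orthonormal basis Q of that span,
   the corestriction of V' is again an isometry, and E' o Ad(Q (x) 1) maps
   tau (x) u to a multiple of u, which trace preservation forces to be u. *)

Import Order.TTheory GRing.Theory Num.Theory.

Section ConditionallyMixing.
Set Implicit Arguments. Unset Strict Implicit. Unset Printing Implicit Defensive.
Local Open Scope ring_scope.
Local Open Scope sesquilinear_scope.
Variable C : numClosedFieldType.

Lemma sum_pair (I J : finType) (F : I * J -> C) :
  \sum_(x : I * J) F x = \sum_i \sum_j F (i, j).
Proof. by rewrite pair_bigA; apply: eq_bigr => -[]. Qed.

Lemma sum_delta (I : finType) (F : I -> C) (i : I) :
  \sum_k F k * (k == i)%:R = F i.
Proof.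
rewrite (bigD1 i) //= eqxx mulr1 big1 ?addr0 // => k /negbTE->.
by rewrite mulr0.
Qed.

Lemma sum_pair_deltal (K I : finType) (k : K) (f : I -> C) (G : K * I -> C) :
  \sum_(s : K * I) (s.1 == k)%:R * f s.2 * G s = \sum_i f i * G (k, i).
Proof.
have := sum_delta (fun k' => \sum_i f i * G (k', i)) k => /= <-.
rewrite sum_pair; apply: eq_bigr => k' _; rewrite mulr_suml.
by apply: eq_bigr => i _ /=; ring.
Qed.

Lemma sum_pair_deltar (K B : finType) (b : B) (f : K -> C) (G : K * B -> C) :
  \sum_(s : K * B) f s.1 * (s.2 == b)%:R * G s = \sum_k f k * G (k, b).
Proof.
rewrite sum_pair; apply: eq_bigr => k _.
have := sum_delta (fun b' => f k * G (k, b')) b => /= <-.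
by apply: eq_bigr => b' _ /=; ring.
Qed.

(* [L : J -> I -> C] stands for the [J x I] matrix with entries [L j i]. *)
Definition isometric (I J : finType) (L : J -> I -> C) : Prop :=
  forall s t, \sum_u (L u s)^* * L u t = (s == t)%:R.

Definition sandwich (I J : finType) (L : J -> I -> C) (X : op C I) : op C J :=
  [ffun p => \sum_s \sum_t L p.1 s * X (s, t) * (L p.2 t)^*].

Definition rank1 (I : finType) (v w : I -> C) : op C I :=
  [ffun p => v p.1 * (w p.2)^*].

Lemma sandwich_entry (I J : finType) (L : J -> I -> C) (X : op C I) p :
  sandwich L X p = \sum_s L p.1 s * \sum_t (L p.2 t)^* * X (s, t).
Proof.
rewrite ffunE; apply: eq_bigr => s _; rewrite mulr_sumr.
by apply: eq_bigr => t _; ring.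
Qed.

Lemma sandwich_linear (I J : finType) (L : J -> I -> C) : linear_map (sandwich L).
Proof.
move=> a X Y; apply/ffunP => p; rewrite !ffunE mulr_sumr -big_split /=.
apply: eq_bigr => s _; rewrite mulr_sumr -big_split /=.
by apply: eq_bigr => t _; rewrite ffunE; ring.
Qed.

Lemma trace_sandwich (I J : finType) (L : J -> I -> C) (X : op C I) :
  isometric L -> trace (sandwich L X) = trace X.
Proof.
move=> hL; rewrite /trace.
transitivity (\sum_s \sum_t X (s, t) * \sum_u (L u t)^* * L u s).
  under eq_bigr do rewrite ffunE /=.
  rewrite exchange_big /=; apply: eq_bigr => s _.
  rewrite exchange_big /=; apply: eq_bigr => t _.
  by rewrite mulr_sumr; apply: eq_bigr => u _; ring.
by apply: eq_bigr => s _; under eq_bigr do rewrite hL; exact: sum_delta.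
Qed.

Lemma psd_rank1 (I : finType) (v : I -> C) : psd (rank1 v v).
Proof.
move=> x.
have -> : \sum_i \sum_j (x i)^* * rank1 v v (i, j) * x j
    = (\sum_i (x i)^* * v i) * (\sum_i (x i)^* * v i)^*.
  rewrite rmorph_sum mulr_suml; apply: eq_bigr => i _.
  rewrite mulr_sumr; apply: eq_bigr => j _.
  by rewrite ffunE /= rmorphM /= conjCK; ring.
exact: mul_conjC_ge0.
Qed.

Lemma psd_sandwich (I J : finType) (L : J -> I -> C) (X : op C I) :
  psd X -> psd (sandwich L X).
Proof.
move=> hX v; pose y t := \sum_u (L u t)^* * v u.
have -> : \sum_i \sum_j (v i)^* * sandwich L X (i, j) * v j
    = \sum_s \sum_t (y s)^* * X (s, t) * y t.
  transitivity
    (\sum_i \sum_j \sum_s \sum_t (v i)^* * L i s * X (s, t) * (L j t)^* * v j).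
    apply: eq_bigr => i _; apply: eq_bigr => j _.
    rewrite ffunE /= mulr_sumr mulr_suml; apply: eq_bigr => s _.
    by rewrite mulr_sumr mulr_suml; apply: eq_bigr => t _; ring.
  under eq_bigr do rewrite exchange_big /=.
  rewrite exchange_big /=; apply: eq_bigr => s _.
  under eq_bigr do rewrite exchange_big /=.
  rewrite exchange_big /=; apply: eq_bigr => t _.
  rewrite /y rmorph_sum /= !mulr_suml; apply: eq_bigr => i _.
  rewrite !mulr_sumr; apply: eq_bigr => j _.
  by rewrite rmorphM /= conjCK; ring.
exact: hX.
Qed.

Lemma id_tens_sandwich (K I J : finType) (L : J -> I -> C) (X : op C (K * I)%type) :
  id_tens (sandwich L) X = sandwich (fun u t => (t.1 == u.1)%:R * L u.2 t.2) X.
Proof.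
apply/ffunP => p; rewrite ffunE !sandwich_entry /= sum_pair_deltal.
apply: eq_bigr => s _; congr (_ * _).
under [RHS]eq_bigr do rewrite rmorphM /= conjC_nat.
rewrite (sum_pair_deltal _ (fun j => (L p.2.2 j)^*) (fun t => X ((p.1.1, s), t))).
by apply: eq_bigr => t _; rewrite ffunE.
Qed.

Lemma completely_positive_sandwich (I J : finType) (L : J -> I -> C) :
  completely_positive (sandwich L).
Proof. by move=> K X hX; rewrite id_tens_sandwich; exact: psd_sandwich. Qed.

Lemma cptp_sandwich (I J : finType) (L : J -> I -> C) :
  isometric L -> cptp (sandwich L).
Proof.
move=> hL; split; [exact: sandwich_linear | exact: completely_positive_sandwich |].
by move=> X; exact: trace_sandwich.
Qed.

Lemma id_tens_comp (K I J H : finType) (F : linmap C I J) (G : linmap C J H)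
    (X : op C (K * I)%type) :
  id_tens (fun Y => G (F Y)) X = id_tens G (id_tens F X).
Proof.
apply/ffunP => p; rewrite !ffunE; congr (G _ _).
by apply/ffunP => u; rewrite !ffunE -!surjective_pairing.
Qed.

Lemma cptp_comp (I J H : finType) (F : linmap C I J) (G : linmap C J H) :
  cptp F -> cptp G -> cptp (fun X => G (F X)).
Proof.
move=> [lF cpF tpF] [lG cpG tpG]; split.
- by move=> a X Y; rewrite lF lG.
- by move=> K X hX; rewrite id_tens_comp; apply: cpG; apply: cpF.
- by move=> X; rewrite tpG tpF.
Qed.

Definition op_subspace (I : finType) (P : op C I -> Prop) : Prop :=
  P [ffun _ => 0] /\ forall a X Y, P X -> P Y -> P [ffun p => a * X p + Y p].

Lemma polarization (x1 x2 y1 y2 : C) :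
  x1 * y2^* = 4%:R^-1 * ((x1 + x2) * (y1 + y2)^* + (-1) * ((x1 - x2) * (y1 - y2)^*)
    + 'i * ((x1 + 'i * x2) * (y1 + 'i * y2)^*)
    + (- 'i) * ((x1 - 'i * x2) * (y1 - 'i * y2)^*)).
Proof.
rewrite !rmorphD !rmorphN !rmorphM /= conjCi.
set i := 'i.
have -> : forall a b c d : C,
    (a + b) * (c + d) + (-1) * ((a - b) * (c - d)) + i * ((a + i * b) * (c + - i * d))
    + - i * ((a - i * b) * (c - - i * d))
    = 4%:R * (a * d) + (i ^+ 2 + 1) * (2%:R * (b * c - a * d)).
  by move=> a b c d; ring.
by rewrite /i sqrCi addNr mul0r addr0; field.
Qed.

Section DensitySpan.
Variables (I : finType) (P : op C I -> Prop).
Hypothesis subP : op_subspace P.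

Lemma op_subspaceZ a X : P X -> P [ffun p => a * X p].
Proof.
have -> : [ffun p => a * X p] = [ffun p => a * X p + [ffun _ => 0] p].
  by apply/ffunP => p; rewrite !ffunE addr0.
by move=> hX; apply: subP.2 => //; exact: subP.1.
Qed.

Lemma op_subspace_sum (T : Type) (l : seq T) (c : T -> C) (F : T -> op C I) :
  (forall s, P (F s)) -> P [ffun p => \sum_(s <- l) c s * F s p].
Proof.
move=> hF; elim: l => [|s l IH].
  have -> : [ffun p => \sum_(s <- [::]) c s * F s p] = [ffun _ => 0].
    by apply/ffunP => p; rewrite !ffunE big_nil.
  exact: subP.1.
have -> : [ffun p => \sum_(s0 <- s :: l) c s0 * F s0 p] =
    [ffun p => c s * F s p + [ffun p => \sum_(s <- l) c s * F s p] p].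
  by apply/ffunP => p; rewrite !ffunE big_cons.
exact: subP.2.
Qed.

Hypothesis densityP : forall rho, density rho -> P rho.

Lemma op_subspace_rank1_diag (v : I -> C) : P (rank1 v v).
Proof.
set t := \sum_i v i * (v i)^*.
have vv_ge0 i : 0 <= v i * (v i)^* by exact: mul_conjC_ge0.
have [t0|tn0] := eqVneq t 0.
  have v0 i : v i = 0.
    move/eqP: t0; rewrite psumr_eq0 // => /allP/(_ i (mem_index_enum i)).
    by rewrite mul_conjC_eq0 => /eqP.
  have -> : rank1 v v = [ffun _ => 0] by apply/ffunP => p; rewrite !ffunE v0 mul0r.
  exact: subP.1.
have -> : rank1 v v = [ffun p => t * [ffun p => t^-1 * rank1 v v p] p].
  by apply/ffunP => p; rewrite !ffunE mulrA mulfV // mul1r.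
apply: op_subspaceZ; apply: densityP; split.
  move=> x.
  have -> : \sum_i \sum_j (x i)^* * [ffun p => t^-1 * rank1 v v p] (i, j) * x j =
      t^-1 * (\sum_i \sum_j (x i)^* * rank1 v v (i, j) * x j).
    rewrite mulr_sumr; apply: eq_bigr => i _; rewrite mulr_sumr.
    by apply: eq_bigr => j _; rewrite ffunE; ring.
  by apply: mulr_ge0; [rewrite invr_ge0 sumr_ge0 | exact: psd_rank1].
rewrite /trace; under eq_bigr do rewrite !ffunE /=.
by rewrite -mulr_sumr mulVf.
Qed.

Lemma op_subspace_rank1 (v w : I -> C) : P (rank1 v w).
Proof.
pose r c := rank1 (fun k => v k + c * w k) (fun k => v k + c * w k).
have -> : rank1 v w = [ffun p => 4%:R^-1 *
    [ffun p => (- 'i) * r (- 'i) p + [ffun p => 'i * r 'i p +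
      [ffun p => (-1) * r (-1) p + r 1 p] p] p] p].
  apply/ffunP => p; rewrite !ffunE /= (polarization (v p.1) (w p.1) (v p.2) (w p.2)).
  by congr (_ * _); rewrite !mulN1r !mul1r !mulNr; ring.
have r_in c : P (r c) by exact: op_subspace_rank1_diag.
by apply: op_subspaceZ; do 3 (apply: subP.2 => //).
Qed.

Lemma op_subspace_all X : P X.
Proof.
pose e (k : I) m : C := (m == k)%:R.
have -> : X = [ffun p => \sum_(s <- index_enum {: I * I}) X s * rank1 (e s.1) (e s.2) p].
  apply/ffunP => p; rewrite ffunE (bigD1 p) //= big1 ?addr0.
    by rewrite ffunE /e /= !eqxx conjC_nat !mulr1.
  move=> s hs; rewrite ffunE /e /= conjC_nat -natrM mulnb.
  case: p s hs => [i j] [k l] /= hkl.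
  case: eqP => [eki|]; case: eqP => [elj|] //=; rewrite ?mulr0 //.
  by move: hkl; rewrite eki elj eqxx.
by apply: op_subspace_sum => s; exact: op_subspace_rank1.
Qed.

End DensitySpan.

Lemma linear_map0 (I J : finType) (F : linmap C I J) :
  linear_map F -> F [ffun _ => 0] = [ffun _ => 0].
Proof.
move=> hF; have := hF (-1) [ffun _ => 0] [ffun _ => 0].
have -> : [ffun p => -1 * [ffun _ => (0 : C)] p + [ffun _ => 0] p] = [ffun _ => 0] :> op C I.
  by apply/ffunP => p; rewrite !ffunE mulr0 addr0.
by move=> ->; apply/ffunP => p; rewrite !ffunE; ring.
Qed.

Lemma optens0 (I J : finType) (Y : op C J) :
  optens [ffun _ => 0] Y = [ffun _ => 0] :> op C (I * J)%type.
Proof. by apply/ffunP => p; rewrite !ffunE mul0r. Qed.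

Lemma optensDl (I J : finType) (Y : op C J) a (X1 X2 : op C I) :
  optens [ffun p => a * X1 p + X2 p] Y = [ffun p => a * optens X1 Y p + optens X2 Y p].
Proof. by apply/ffunP => p; rewrite !ffunE; ring. Qed.

Lemma trace_optens (I J : finType) (X : op C I) (Y : op C J) :
  trace (optens X Y) = trace X * trace Y.
Proof.
rewrite /trace sum_pair mulr_suml; apply: eq_bigr => i _.
by rewrite mulr_sumr; apply: eq_bigr => j _; rewrite ffunE.
Qed.

Lemma trace_mixed (B : finType) : (0 < #|B|)%N -> trace (mixed C B) = 1.
Proof.
move=> hB; rewrite /trace; under eq_bigr do rewrite ffunE /= eqxx.
rewrite sumr_const; change ((1%:R / #|B|%:R) *+ #|B| = 1 :> C).
by rewrite -mulr_natr mul1r mulVf // pnatr_eq0 -lt0n.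
Qed.

Lemma sandwich_rank1 (I J : finType) (L : J -> I -> C) (X : op C I) :
  sandwich L X =
  [ffun p => \sum_(st <- index_enum {: I * I}) X st * rank1 (L^~ st.1) (L^~ st.2) p].
Proof.
apply/ffunP => p; rewrite !ffunE sum_pair; apply: eq_bigr => s _.
by apply: eq_bigr => t _; rewrite ffunE; ring.
Qed.

Definition maps_to_mixed (R B : finType) (E : linmap C (R * B)%type B) (X : op C R) :=
  exists c, E (optens X (mixed C B)) = [ffun p => c * mixed C B p].

Lemma maps_to_mixed_subspace (R B : finType) (E : linmap C (R * B)%type B) :
  linear_map E -> op_subspace (maps_to_mixed E).
Proof.
move=> hl; split.
  by exists 0; rewrite optens0 linear_map0 //; apply/ffunP => p; rewrite !ffunE mul0r.
move=> a X Y [c1 h1] [c2 h2]; exists (a * c1 + c2).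
by rewrite optensDl hl h1 h2; apply/ffunP => p; rewrite !ffunE; ring.
Qed.

Lemma maps_to_mixed_trace (R B : finType) (E : linmap C (R * B)%type B) (X : op C R) :
  (0 < #|B|)%N -> trace_preserving E -> maps_to_mixed E X ->
  E (optens X (mixed C B)) = [ffun p => trace X * mixed C B p].
Proof.
move=> hB htp [c hc]; rewrite hc; suff -> : c = trace X by [].
have := htp (optens X (mixed C B)); rewrite hc trace_optens trace_mixed // mulr1.
rewrite /trace; under eq_bigr do rewrite ffunE.
by rewrite -mulr_sumr; move: (trace_mixed hB); rewrite /trace => ->; rewrite mulr1.
Qed.

Section Composition.
Variables (A' A B R : finType).
Implicit Types (E : linmap C (R * B)%type B) (W : {ffun ((R * A) * A')%type -> C}).

Lemma compose_RB_ext E (V1 V2 : linmap C A' (R * A)%type) :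
  V1 =1 V2 -> compose_RB E V1 =1 compose_RB E V2.
Proof.
move=> eV X; apply/ffunP => p; rewrite /compose_RB !ffunE; congr (E _ _).
by apply/ffunP => u; rewrite /tens_id !ffunE eV.
Qed.

Definition Rblock W (rho : op C A') (a a' : A) : op C R :=
  [ffun q => \sum_i \sum_j W ((q.1, a), i) * rho (i, j) * (W ((q.2, a'), j))^*].

Lemma compose_RB_optens E W (rho : op C A') (Y : op C B) :
  compose_RB E (sandwich (fun x i => W (x, i))) (optens rho Y) =
  [ffun p => E (optens (Rblock W rho p.1.1 p.2.1) Y) (p.1.2, p.2.2)].
Proof.
apply/ffunP => p; rewrite /compose_RB !ffunE; congr (E _ _).
apply/ffunP => q; rewrite /tens_id !ffunE mulr_suml; apply: eq_bigr => i _.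
by rewrite mulr_suml; apply: eq_bigr => j _; rewrite !ffunE /=; ring.
Qed.

Lemma cond_unital_optens E : (0 < #|B|)%N -> linear_map E -> cond_unital E ->
  forall X : op C R, E (optens X (mixed C B)) = [ffun p => trace X * mixed C B p].
Proof.
move=> hB hl hu; apply: op_subspace_all; last first.
  move=> rho rho_dens; rewrite hu //; case: rho_dens => _ tr1.
  by apply/ffunP => p; rewrite [RHS]ffunE tr1 mul1r.
split=> [|a X Y hX hY] /=.
  rewrite optens0 linear_map0 //; apply/ffunP => p; rewrite !ffunE /trace.
  by rewrite big1 ?mul0r // => i _; rewrite ffunE.
rewrite optensDl hl hX hY; apply/ffunP => p; rewrite !ffunE.
rewrite /trace; under [X in _ = X * _]eq_bigr do rewrite ffunE.
by rewrite big_split /= -mulr_sumr; ring.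
Qed.

Definition ptrace_R W (rho : op C A') : op C A :=
  [ffun p => trace (Rblock W rho p.1 p.2)].

Lemma density_ptrace_R W (rho : op C A') :
  Defs.isometry W -> density rho -> density (ptrace_R W rho).
Proof.
move=> hW [rho_psd tr1]; split.
  move=> v.
  have -> : \sum_a \sum_a' (v a)^* * ptrace_R W rho (a, a') * v a' =
      \sum_r \sum_a \sum_a' (v a)^* * Rblock W rho a a' (r, r) * v a'.
    under eq_bigr do under eq_bigr do rewrite ffunE /= mulr_sumr mulr_suml.
    by under eq_bigr do rewrite exchange_big /=; rewrite exchange_big.
  apply: sumr_ge0 => r _.
  have := psd_sandwich (fun a i => W ((r, a), i)) rho_psd v.
  by congr (_ <= _); apply: eq_bigr => a _; apply: eq_bigr => a' _; rewrite !ffunE.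
rewrite -tr1 -(trace_sandwich rho (L := fun x i => W (x, i))) //.
rewrite /trace sum_pair exchange_big /=; apply: eq_bigr => a _.
by rewrite ffunE; apply: eq_bigr => r _; rewrite !ffunE.
Qed.

Lemma compose_RB_cond_unital E W (rho : op C A') :
  (0 < #|B|)%N -> linear_map E -> cond_unital E ->
  compose_RB E (sandwich (fun x i => W (x, i))) (optens rho (mixed C B)) =
  optens (ptrace_R W rho) (mixed C B).
Proof.
move=> hB hl hu; rewrite compose_RB_optens.
by apply/ffunP => p; rewrite ffunE (cond_unital_optens hB hl hu) !ffunE.
Qed.

Lemma maps_to_mixed_Rblock E W (N : linmap C (A' * B)%type (A * B)%type) :
  N =1 compose_RB E (sandwich (fun x i => W (x, i))) ->
  (forall rho, density rho -> exists sigma : op C A,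
     density sigma /\ N (optens rho (mixed C B)) = optens sigma (mixed C B)) ->
  forall a a' rho, density rho -> maps_to_mixed E (Rblock W rho a a').
Proof.
move=> eN hmix a a' rho /hmix [sigma [_ e]]; exists (sigma (a, a')); apply/ffunP => b.
move/ffunP: e => /(_ ((a, b.1), (a', b.2))).
by rewrite eN compose_RB_optens !ffunE /= -!surjective_pairing.
Qed.

Lemma op_subspace_Rblock W (P : op C R -> Prop) a a' :
  op_subspace P -> op_subspace (fun rho => P (Rblock W rho a a')).
Proof.
move=> subP; split=> [|b X Y hX hY] /=.
  have -> : Rblock W [ffun _ => 0] a a' = [ffun _ => 0].
    apply/ffunP => p; rewrite !ffunE big1 // => k _; rewrite big1 // => l _.
    by rewrite ffunE mulr0 mul0r.
  exact: subP.1.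
have -> : Rblock W [ffun p => b * X p + Y p] a a' =
    [ffun p => b * Rblock W X a a' p + Rblock W Y a a' p].
  apply/ffunP => p; rewrite !ffunE mulr_sumr -big_split /=; apply: eq_bigr => k _.
  by rewrite mulr_sumr -big_split /=; apply: eq_bigr => l _; rewrite ffunE; ring.
exact: subP.2.
Qed.

Lemma Rblock_unit W a a' i j :
  Rblock W [ffun p => ((p.1 == i)%:R : C) * (p.2 == j)%:R] a a' =
  rank1 (fun r => W ((r, a), i)) (fun r => W ((r, a'), j)).
Proof.
apply/ffunP => p; rewrite !ffunE.
transitivity (\sum_k (\sum_l (W ((p.1, a), k) * (W ((p.2, a'), l))^* * (k == i)%:R)
   * (l == j)%:R)).
  by apply: eq_bigr => k _; apply: eq_bigr => l _; rewrite ffunE /=; ring.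
under eq_bigr do rewrite sum_delta.
rewrite -(sum_delta (fun k => W ((p.1, a), k) * (W ((p.2, a'), j))^*) i).
by apply: eq_bigr => k _; rewrite mulrAC.
Qed.

Lemma maps_to_mixed_columns E W : linear_map E ->
  (forall a a' rho, density rho -> maps_to_mixed E (Rblock W rho a a')) ->
  forall s t : A * A',
  maps_to_mixed E (rank1 (fun r => W ((r, s.1), s.2)) (fun r => W ((r, t.1), t.2))).
Proof.
move=> hl hmix [a i] [a' j]; rewrite -Rblock_unit.
have Rblock_sub := op_subspace_Rblock W a a' (maps_to_mixed_subspace hl).
exact: (op_subspace_all Rblock_sub (hmix a a')).
Qed.

End Composition.

Lemma sum_enum_rank (R : finType) (F : 'I_#|R| -> C) :
  \sum_(x : 'I_#|R|) F x = \sum_(r : R) F (enum_rank r).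
Proof. by rewrite (reindex (@enum_rank R)) //; apply: onW_bij; exact: enum_rank_bij. Qed.

(* Gram-Schmidt orthonormalisation of the columns of [w]. *)
Lemma isometric_factorization (R S : finType) (w : R -> S -> C) :
  exists n (Q : R -> 'I_n -> C) (c : 'I_n -> S -> C) (d : S -> 'I_n -> C),
  [/\ isometric Q, forall r s, w r s = \sum_k Q r k * c k s &
      forall r k, Q r k = \sum_s w r s * d s k].
Proof.
pose U : 'M[C]_(#|S|, #|R|) := \matrix_(i, j) w (enum_val j) (enum_val i).
pose Q := schmidt (row_base U).
have eQ : (Q :=: U)%MS := eqmx_trans (eqmx_schmidt_free (row_base_free U)) (eq_row_base U).
have uQ : Q *m Q^t* = 1%:M.
  by apply/eqP; exact: (schmidt_unitarymx (row_base U) (rank_leq_col U)).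
exists (\rank U), (fun r k => Q k (enum_rank r)),
  (fun k s => (U *m pinvmx Q) (enum_rank s) k),
  (fun s k => (Q *m pinvmx U) k (enum_rank s)); split.
- move=> k l; move/matrixP: uQ => /(_ l k); rewrite !mxE eq_sym => <-.
  by rewrite sum_enum_rank; apply: eq_bigr => r _; rewrite !mxE mulrC.
- move=> r s; have U_Q : (U <= Q)%MS by rewrite eQ.
  move/matrixP: (mulmxKpV U_Q) => /(_ (enum_rank s) (enum_rank r)).
  rewrite !mxE !enum_rankK => <-.
  by apply: eq_bigr => k _; rewrite mulrC.
- move=> r k; have Q_U : (Q <= U)%MS by rewrite eQ.
  move/matrixP: (mulmxKpV Q_U) => /(_ k (enum_rank r)); rewrite !mxE => <-.
  rewrite sum_enum_rank; apply: eq_bigr => s _.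
  by rewrite !mxE !enum_rankK mulrC.
Qed.

(* [embed Q] is conjugation by [Q (x) id_B]. *)
Definition embed (K R B : finType) (Q : R -> K -> C) : linmap C (K * B)%type (R * B)%type :=
  sandwich (fun u t => Q u.1 t.1 * (t.2 == u.2)%:R).

Section Embedding.
Variables (K R B : finType) (Q : R -> K -> C).

Lemma embedE (Y : op C (K * B)%type) : embed Q Y =
  [ffun p => \sum_k \sum_l Q p.1.1 k * Y ((k, p.1.2), (l, p.2.2)) * (Q p.2.1 l)^*].
Proof.
apply/ffunP => p; rewrite sandwich_entry sum_pair_deltar ffunE.
apply: eq_bigr => k _.
under [X in _ * X = _]eq_bigr do rewrite rmorphM /= conjC_nat.
rewrite (sum_pair_deltar _ (fun l => (Q p.2.1 l)^*) (fun t => Y ((k, p.1.2), t))).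
by rewrite mulr_sumr; apply: eq_bigr => l _; ring.
Qed.

Lemma embed_optens (tau : op C K) (Y : op C B) :
  embed Q (optens tau Y) = optens (sandwich Q tau) Y.
Proof.
apply/ffunP => p; rewrite embedE !ffunE mulr_suml; apply: eq_bigr => k _.
by rewrite mulr_suml; apply: eq_bigr => l _; rewrite !ffunE; ring.
Qed.

Lemma cptp_embed : isometric Q -> cptp (@embed K R B Q).
Proof.
move=> hQ; apply: cptp_sandwich => -[k b] [l b']; rewrite sum_pair /=.
transitivity (\sum_r (Q r k)^* * Q r l * (b' == b)%:R).
  apply: eq_bigr => r _; rewrite -(sum_delta (fun b0 => _ * (b' == b0)%:R) b).
  by apply: eq_bigr => b0 _; rewrite rmorphM /= conjC_nat eq_sym; ring.
by rewrite -mulr_suml hQ -natrM mulnb xpair_eqE (eq_sym b').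
Qed.

End Embedding.

Lemma cond_unital_embed (R B S K : finType) (E : linmap C (R * B)%type B)
    (w : R -> S -> C) (Q : R -> K -> C) (d : S -> K -> C) :
  (0 < #|B|)%N -> cptp E -> isometric Q -> (forall r k, Q r k = \sum_s w r s * d s k) ->
  (forall s t, maps_to_mixed E (rank1 (w^~ s) (w^~ t))) ->
  cond_unital (fun Y => E (embed Q Y)).
Proof.
move=> hB [hl _ htp] hQ Qw hw tau [_ tr1].
have hsub := maps_to_mixed_subspace hl.
have QQ_mixed k l : maps_to_mixed E (rank1 (Q^~ k) (Q^~ l)).
  have -> : rank1 (Q^~ k) (Q^~ l) = [ffun p => \sum_(st <- index_enum {: S * S})
      (d st.1 k * (d st.2 l)^*) * rank1 (w^~ st.1) (w^~ st.2) p].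
    apply/ffunP => p; rewrite !ffunE /= !Qw rmorph_sum mulr_suml sum_pair.
    apply: eq_bigr => s _; rewrite mulr_sumr; apply: eq_bigr => t _.
    by rewrite ffunE rmorphM /=; ring.
  by apply: (op_subspace_sum hsub) => st; exact: hw.
have tau_mixed : maps_to_mixed E (sandwich Q tau).
  by rewrite sandwich_rank1; apply: (op_subspace_sum hsub) => st; exact: QQ_mixed.
rewrite /= embed_optens (maps_to_mixed_trace hB htp tau_mixed) trace_sandwich // tr1.
by apply/ffunP => p; rewrite ffunE mul1r.
Qed.

Lemma inner_factor (R S K : finType) (w : R -> S -> C) (Q : R -> K -> C)
    (c : K -> S -> C) :
  isometric Q -> (forall r s, w r s = \sum_k Q r k * c k s) ->
  forall s t, \sum_r (w r s)^* * w r t = \sum_k (c k s)^* * c k t.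
Proof.
move=> hQ hw s t.
transitivity (\sum_k \sum_l (c k s)^* * c l t * \sum_r (Q r k)^* * Q r l).
  under eq_bigr do rewrite !hw rmorph_sum mulr_suml.
  rewrite exchange_big /=; apply: eq_bigr => k _.
  under eq_bigr do rewrite mulr_sumr.
  rewrite exchange_big /=; apply: eq_bigr => l _.
  by rewrite mulr_sumr; apply: eq_bigr => r _; rewrite rmorphM /=; ring.
apply: eq_bigr => k _; under eq_bigr do rewrite hQ eq_sym.
exact: sum_delta.
Qed.

Lemma sum_sandwichA (K I : finType) (a b : K -> C) (f g : K -> I -> C) (Z : I -> I -> C) :
  \sum_k \sum_l a k * (\sum_i \sum_j f k i * Z i j * (g l j)^*) * (b l)^* =
  \sum_i \sum_j (\sum_k a k * f k i) * Z i j * (\sum_l b l * g l j)^*.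
Proof.
transitivity (\sum_k \sum_l \sum_i \sum_j a k * f k i * Z i j * ((g l j)^* * (b l)^*)).
  apply: eq_bigr => k _; apply: eq_bigr => l _.
  rewrite mulr_sumr mulr_suml; apply: eq_bigr => i _.
  by rewrite mulr_sumr mulr_suml; apply: eq_bigr => j _; ring.
under eq_bigr do rewrite exchange_big /=.
rewrite exchange_big /=; apply: eq_bigr => i _.
under eq_bigr do rewrite exchange_big /=.
rewrite exchange_big /=; apply: eq_bigr => j _.
rewrite rmorph_sum /= mulr_suml mulr_suml; apply: eq_bigr => k _.
by rewrite mulr_sumr; apply: eq_bigr => l _; rewrite rmorphM /=; ring.
Qed.

Definition corestrict (K A A' : finType) (c : K -> A * A' -> C) :
  {ffun ((K * A) * A')%type -> C} := [ffun p => c p.1.1 (p.1.2, p.2)].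

Section Corestriction.
Variables (A' A B R K : finType) (W : {ffun ((R * A) * A')%type -> C}).
Variables (Q : R -> K -> C) (c : K -> A * A' -> C).
Hypothesis W_factor : forall r s, W ((r, s.1), s.2) = \sum_k Q r k * c k s.

Lemma isometry_corestrict :
  Defs.isometry W -> isometric Q -> Defs.isometry (corestrict c).
Proof.
move=> hW hQ i j; rewrite -hW !sum_pair [LHS]exchange_big [RHS]exchange_big /=.
apply: eq_bigr => a _; under eq_bigr do rewrite !ffunE /=.
by rewrite -(inner_factor (w := fun r s => W ((r, s.1), s.2)) hQ W_factor (a, i) (a, j)).
Qed.

Lemma compose_RB_embed (E : linmap C (R * B)%type B) :
  compose_RB (fun Y => E (embed Q Y)) (sandwich (fun x i => corestrict c (x, i))) =1
  compose_RB E (sandwich (fun x i => W (x, i))).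
Proof.
move=> X; apply/ffunP => p; rewrite /compose_RB !ffunE; congr (E _ _).
apply/ffunP => u; rewrite embedE /tens_id !ffunE /=.
under eq_bigr do under eq_bigr do rewrite !ffunE /=.
rewrite (sum_sandwichA (Q u.1.1) (Q u.2.1)).
apply: eq_bigr => i _; apply: eq_bigr => j _.
rewrite (W_factor _ (p.1.1, i)) (W_factor _ (p.2.1, j)).
by congr (_ * _ * _^*); apply: eq_bigr => k _; rewrite ffunE.
Qed.

End Corestriction.

End ConditionallyMixing.

Theorem theorem14 (C : numClosedFieldType) (A' A B : finType)
  (hA' : 0 < #|A'|) (hA : 0 < #|A|) (hB : 0 < #|B|)
  (N : linmap C (A' * B)%type (A * B)%type) (hN : cptp N) :
  cond_mixing N <->
  exists (R : finType) (V : linmap C A' (R * A)%type) (E : linmap C (R * B)%type B),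
    [/\ isometry_channel V, cptp E, cond_unital E &
        forall X, N X = compose_RB E V X].
Proof.
split.
- move=> [[R [V' [E' [[W [hW hV']] hE' hNeq]]]] hmix].
  have N_eq : N =1 compose_RB E' (sandwich (fun x i => W (x, i))).
    by move=> X; rewrite hNeq; exact: compose_RB_ext.
  have [hl _ _] := hE'.
  have [n [Q [c [d [hQ W_factor Q_span]]]]] :=
    isometric_factorization (fun r (s : A * A') => W ((r, s.1), s.2)).
  exists ('I_n : finType), (sandwich (fun x i => corestrict c (x, i))),
    (fun Y => E' (embed Q Y)); split.
  + by exists (corestrict c); split=> //; exact: isometry_corestrict W_factor hW hQ.
  + exact: cptp_comp (cptp_embed _ hQ) hE'.
  + apply: cond_unital_embed hB hE' hQ Q_span _.
    exact: maps_to_mixed_columns hl (maps_to_mixed_Rblock N_eq hmix).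
  + by move=> X; rewrite N_eq (compose_RB_embed W_factor).
- move=> [R [V [E [[W [hW hV]] hE hu hNeq]]]]; split.
    by exists R, V, E; split=> //; exists W.
  have [hl _ _] := hE.
  move=> rho hrho; exists (ptrace_R W rho); split; first exact: density_ptrace_R.
  by rewrite hNeq (compose_RB_ext E hV) compose_RB_cond_unital.
Qed.
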